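(* Let $n\in\mathbb N$, let $J$ be an arbitrary $n$-field function and let $K_1,\dots,K_n$ be kernel functions satisfying (PM$_c$) for some $c>0$. Let $\mathbf y\in Y$. For each $j\in\{0,1,\dots,n\}$ let $t_{*j},t^*_j\in\operatorname{rint}I_j(\mathbf y)$ be arbitrary points with $t_{*j}\le t^*_j$. For each $j\in\{0,\dots,n\}$ and $r\in\{1,\dots,n\}$ let $$\mu_{jr}\in\bigl[D_-K_r(t^*_j-y_r),\,D_-K_r(t_{*j}-y_r)\bigr]$$ be arbitrary. Define the $n\times n$ matrix $A=[a_{jr}]_{j,r=1}^n$ by $a_{jr}:=\mu_{jr}-\mu_{(j-1)r}$. Then $$a_{rr}-\sum_{j=1,\,j\ne r}^n|a_{jr}|\ge c\qquad(r=1,\dots,n).$$ In particular, $A$ is invertible.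
   Context: A kernel function is a function $K:(-1,0)\cup(0,1)\to\mathbb R$ that is concave on $(-1,0)$ and concave on $(0,1)$ and satisfies $\lim_{t\downarrow0}K(t)=\lim_{t\uparrow0}K(t)$. It is extended to $[-1,1]$ by its one-sided limits. For $c\ge0$, a kernel function satisfies (PM$_c$) if $K'(t)-K'(t-1)\ge c$ for almost every $t\in(0,1)$. $D_-K$ denotes the left derivative. An $n$-field function is a function $J:[0,1]\to[-\infty,\infty)$ that is bounded above and whose set of finite values has total weight strictly greater than $n$. Here the points $0$ and $1$ each have weight $1/2$ and every point of $(0,1)$ has weight $1$. $S=\{\mathbf y\in\mathbb R^n:0<y_1<\dots<y_n<1\}$. Set $y_0:=0$ and $y_{n+1}:=1$. Let $I_j(\mathbf y)=[y_j,y_{j+1}]$ and $m_j(\mathbf y)=\sup_{t\in I_j(\mathbf y)}\bigl(J(t)+\sum_iK_i(t-y_i)\bigr)$. $Y=\{\mathbf y\in S:m_j(\mathbf y)\neq-\infty\ \forall j\}$. $\operatorname{rint}$ denotes the interior relative to $[0,1]$; thus $\operatorname{rint}I_0=[0,y_1)$, $\operatorname{rint}I_n=(y_n,1]$, and $\operatorname{rint}I_j=(y_j,y_{j+1})$ otherwise. *)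

From HB Require Import structures.
From mathcomp Require Import all_boot all_order all_algebra.
From mathcomp Require Import all_classical all_reals all_analysis.
Set Implicit Arguments. Unset Strict Implicit. Unset Printing Implicit Defensive.
Import Order.TTheory GRing.Theory Num.Theory.
Import numFieldNormedType.Exports.
Local Open Scope classical_set_scope.
Local Open Scope ring_scope.

Section Defs.
Variable R : realType.

Definition concave_on (f : R -> R) (a b : R) : Prop :=
  forall x y l : R, a < x < b -> a < y < b -> 0 <= l <= 1 ->
    l * f x + (1 - l) * f y <= f (l * x + (1 - l) * y).

(* Kernel function: K is (the real-valued function) given on (-1,0) u (0,1);
   concave on each piece, with equal one-sided limits at 0 (in [-oo,+oo]). *)
Definition kernel_function (K : R -> R) : Prop :=
  concave_on K (-1) 0 /\ concave_on K 0 1 /\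
  exists L : \bar R,
    ((fun t => (K t)%:E) @ 0^'+ --> L) /\ ((fun t => (K t)%:E) @ 0^'- --> L).

Definition kext (K : R -> R) (x : R) : \bar R :=
  if x == 0 then lim ((fun t => (K t)%:E) @ 0^'+) else (K x)%:E.

Definition PM (c : R) (K : R -> R) : Prop :=
  (@lebesgue_measure R).-negligible
    [set t : R | 0 < t < 1 /\
       ~ [/\ derivable K t 1, derivable K (t - 1) 1 &
             c <= derive1 K t - derive1 K (t - 1)]].

Definition leftD (K : R -> R) (x : R) : R :=
  lim ((fun s => (K x - K s) / (x - s)) @ x^'-).

Definition pweight (t : R) : \bar R :=
  if (t == 0) || (t == 1) then (2^-1)%:E else 1%E.

Definition n_field (n : nat) (J : R -> \bar R) : Prop :=
  (exists M : R, forall t, 0 <= t <= 1 -> (J t <= M%:E)%E) /\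
  ((n%:R)%:E < \esum_(t in [set t : R | (0 <= t <= 1)%R /\ J t \is a fin_num])
                  pweight t)%E.

(* y_j for j = 0..n+1, with y_0 := 0 and y_{n+1} := 1; the vector y is
   given by y 1, ..., y n. *)
Definition ypt (n : nat) (y : nat -> R) (j : nat) : R :=
  if j == 0%N then 0 else if (j <= n)%N then y j else 1.

Definition inS (n : nat) (y : nat -> R) : Prop :=
  forall j, (j <= n)%N -> ypt n y j < ypt n y j.+1.

Definition mj (n : nat) (J : R -> \bar R) (K : nat -> R -> R) (y : nat -> R)
  (j : nat) : \bar R :=
  ereal_sup [set (J t + \sum_(1 <= i < n.+1) kext (K i) (t - y i))%E
            | t in `[ypt n y j, ypt n y j.+1]].

Definition inY (n : nat) (J : R -> \bar R) (K : nat -> R -> R) (y : nat -> R)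
  : Prop :=
  inS n y /\ forall j, (j <= n)%N -> mj n J K y j != -oo%E.

(* t in rint I_j(y), interior relative to [0,1] *)
Definition in_rint (n : nat) (y : nat -> R) (j : nat) (t : R) : Prop :=
  (if j == 0%N then 0 <= t else ypt n y j < t) /\
  (if j == n then t <= 1 else t < ypt n y j.+1).

End Defs.

From mathcomp Require Import all_boot all_order all_algebra.
From mathcomp Require Import all_classical all_reals all_analysis.
From mathcomp Require Import ring lra zify.
Import Order.TTheory GRing.Theory Num.Theory.
Import numFieldNormedType.Exports.
Local Open Scope classical_set_scope.
Local Open Scope ring_scope.
Set Implicit Arguments. Unset Strict Implicit.

(* The off-diagonal entries of a column are nonpositive: for j <> r the
   points t^*_(j-1) < t_*j lie on the same side of y_r, and the left
   derivative of a concave function is nonincreasing.  Hence the margin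
   a_rr - sum_(j <> r) |a_jr| equals the column sum, which telescopes to
   mu_nr - mu_0r >= D_-K_r(t^*_n - y_r) - D_-K_r(t_*0 - y_r).  Since
   t^*_n - y_r lies in (0,1), t_*0 - y_r in (-1,0) and their distance is at
   most 1, (PM_c) bounds this from below by c: evaluate K' - K'(. - 1) at a
   good point just left of t^*_n - y_r, where D_-K_r is upper semicontinuous
   from the left.  Strict column diagonal dominance then gives
   invertibility. *)

Section Slopes.
Variable R : realType.
Implicit Types (f : R -> R) (p q : R).

Definition slope f p q := (f q - f p) / (q - p).

Lemma slopeK f p q : p < q -> slope f p q * (q - p) = f q - f p.
Proof. by move=> pq; rewrite /slope divfK // subr_eq0 gt_eqF. Qed.

Lemma slope_le_cross f p q x z : p < q -> x < z ->
  (slope f x z <= slope f p q) = ((f z - f x) * (q - p) <= (f q - f p) * (z - x)).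
Proof.
by move=> pq xz; rewrite /slope ler_pdivrMr ?subr_gt0 // mulrAC ler_pdivlMr ?subr_gt0.
Qed.

End Slopes.

Section ConcaveSlopes.
Variables (R : realType) (f : R -> R) (a b : R).
Hypothesis f_concave : concave_on f a b.

Lemma concave_chord p q w : a < p -> p < q -> q < w -> w < b ->
  (f w - f q) * (q - p) <= (f q - f p) * (w - q).
Proof.
move=> ap pq qw wb; have wp : 0 < w - p by lra.
set l := (w - q) / (w - p).
have l01 : 0 <= l <= 1.
  by apply/andP; split; [rewrite divr_ge0 //; lra | rewrite ler_pdivrMr // mul1r; lra].
have lq : l * p + (1 - l) * w = q by rewrite /l; field; lra.
have [pab wab] : a < p < b /\ a < w < b by split; apply/andP; split; lra.
have := f_concave pab wab l01; rewrite lq => /(ler_wpM2l (ltW wp)).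
have -> : (w - p) * (l * f p + (1 - l) * f w) = (w - q) * f p + (q - p) * f w.
  by rewrite /l; field; lra.
nra.
Qed.

Lemma concave_slope_le_r p q w : a < p -> p < q -> q < w -> w < b ->
  slope f p w <= slope f p q.
Proof.
move=> ap pq qw wb; rewrite slope_le_cross //; last by lra.
have := concave_chord ap pq qw wb; nra.
Qed.

Lemma concave_slope_le_l p q w : a < p -> p < q -> q < w -> w < b ->
  slope f q w <= slope f p w.
Proof.
move=> ap pq qw wb; rewrite slope_le_cross //; last by lra.
have := concave_chord ap pq qw wb; nra.
Qed.

Lemma concave_slope_le p q w : a < p -> p < q -> q < w -> w < b ->
  slope f q w <= slope f p q.
Proof.
move=> ap pq qw wb; apply: (le_trans (concave_slope_le_l ap pq qw wb)).
exact: concave_slope_le_r.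
Qed.

Lemma leftD_cvg x : a < x -> x < b ->
  cvg ((fun s => (f x - f s) / (x - s)) @ x^'-).
Proof.
move=> ax xb; rewrite -is_cvgNE; apply: nondecreasing_at_left_is_cvgr.
- near=> z => u v; rewrite !in_itv/= => /andP[zu ux] /andP[zv vx] uv.
  rewrite /= lerN2; have [->|neq_uv] := eqVneq u v; first by [].
  have az : a < z by near: z; exact: nbhs_left_gt.
  apply: concave_slope_le_l; rewrite ?lt_neqAle ?neq_uv //; lra.
- near=> z; exists (- slope f x ((x + b) / 2)) => w [s] /=.
  rewrite in_itv/= => /andP[zs sx] <-; rewrite lerN2.
  have az : a < z by near: z; exact: nbhs_left_gt.
  apply: concave_slope_le => //; lra.
Unshelve. all: by end_near. Qed.

Lemma slope_le_leftD x q : a < x -> x < q -> q < b -> slope f x q <= leftD f x.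
Proof.
move=> ax xq qb; apply: limr_ge; first by apply: leftD_cvg; lra.
by near=> s; apply: concave_slope_le.
Unshelve. all: by end_near. Qed.

Lemma leftD_le_slope s x : a < s -> s < x -> x < b -> leftD f x <= slope f s x.
Proof.
move=> as_ sx xb; apply: limr_le; first by apply: leftD_cvg; lra.
by near=> w; apply: concave_slope_le_l.
Unshelve. all: by end_near. Qed.

Lemma leftD_nonincr p q : a < p -> p < q -> q < b -> leftD f q <= leftD f p.
Proof.
by move=> ap pq qb; apply: le_trans (leftD_le_slope ap pq qb) (slope_le_leftD _ _ _).
Qed.

Lemma derive1_le_slope s t : a < s -> s < t -> t < b ->
  derivable f t 1 -> derive1 f t <= slope f s t.
Proof.
move=> as_ st tb df; have dfl := cvg_dnbhs_at_left df.
rewrite derive1E /derive -(cvg_lim _ dfl) //; apply: limr_le; first exact: cvgP dfl.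
near=> h; have h0 : h < 0 by near: h; exact: nbhs_left_lt.
have sh : s - t < h by near: h; apply: nbhs_left_gt; lra.
change (h^-1 * (f (h * 1 + t) - f t) <= slope f s t).
have -> : h^-1 * (f (h * 1 + t) - f t) = slope f (h + t) t.
  rewrite /slope mulr1 (_ : t - (h + t) = - h); last by ring.
  by field; rewrite lt_eqF.
apply: concave_slope_le_l => //; lra.
Unshelve. all: by end_near. Qed.

Lemma slope_le_derive1 t q : a < t -> t < q -> q < b ->
  derivable f t 1 -> slope f t q <= derive1 f t.
Proof.
move=> at_ tq qb df; have dfr := cvg_dnbhs_at_right df.
rewrite derive1E /derive -(cvg_lim _ dfr) //; apply: limr_ge; first exact: cvgP dfr.
near=> h; have h0 : 0 < h by near: h; exact: nbhs_right_gt.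
have hq : h < q - t by near: h; apply: nbhs_right_lt; lra.
change (slope f t q <= h^-1 * (f (h * 1 + t) - f t)).
have -> : h^-1 * (f (h * 1 + t) - f t) = slope f t (h + t).
  rewrite /slope mulr1 (_ : h + t - t = h); last by ring.
  by field; rewrite gt_eqF.
apply: concave_slope_le_r => //; lra.
Unshelve. all: by end_near. Qed.

Lemma derive1_le_leftD x : a < x -> x < b -> derivable f x 1 -> derive1 f x <= leftD f x.
Proof.
move=> ax xb df; apply: limr_ge; first exact: leftD_cvg.
by near=> s; apply: derive1_le_slope.
Unshelve. all: by end_near. Qed.

Lemma leftD_le_derive1 x u : a < x -> x < u -> u < b ->
  derivable f x 1 -> leftD f u <= derive1 f x.
Proof.
move=> ax xu ub df; apply: le_trans (leftD_le_slope ax xu ub) _.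
exact: slope_le_derive1.
Qed.

Lemma leftD_approx_slope t e : a < t -> t < b -> 0 < e ->
  exists2 s, a < s < t & slope f s t <= leftD f t + e.
Proof.
move=> at_ tb e0.
have : \forall s \near t^'-, (f t - f s) / (t - s) <= leftD f t + e.
  by apply: cvgr_le; [exact: leftD_cvg | rewrite ltrDl].
move=> near_t; near (t^'-) => s; exists s; last by near: s.
by apply/andP; split; near: s; [exact: nbhs_left_gt | exact: nbhs_left_lt].
Unshelve. all: by end_near. Qed.

(* Concavity keeps f(t') below the line of slope [slope f t v] through
   (t, f t); this controls slope f s t' as t' increases to t. *)
Lemma concave_slope_le_shift s t' t v : a < s -> s < t' -> t' < t -> t < v -> v < b ->
  slope f s t' * (t' - s) <=
    slope f s t * (t' - s) + (slope f s t - slope f t v) * (t - t').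
Proof.
move=> as_ st' t't tv vb.
have tv_t't : slope f t v <= slope f t' t by apply: concave_slope_le; lra.
have := slopeK f st'; have := slopeK f t't; have := slopeK f (lt_trans st' t't).
nra.
Qed.

Lemma leftD_usc_left t e : a < t -> t < b -> 0 < e ->
  exists2 s, a < s < t & forall t', s < t' < t -> leftD f t' <= leftD f t + e.
Proof.
move=> at_ tb e0; have e20 : 0 < e / 2 by rewrite divr_gt0.
have [s /andP[as_ st] ste] := leftD_approx_slope at_ tb e20.
set v := (t + b) / 2; set sg := slope f s t - slope f t v.
have sg0 : 0 <= sg by rewrite subr_ge0; apply: concave_slope_le; rewrite /v; lra.
set d := e * (t - s) / (4 * (sg + e)).
have den0 : 0 < 4 * (sg + e) by apply: mulr_gt0 => //; lra.
have d0 : 0 < d by rewrite divr_gt0 // mulr_gt0 // subr_gt0.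
have d_small : d <= (t - s) / 4.
  by rewrite ler_pdivrMr // mulrAC ler_pdivlMr //; nra.
have sg_d : sg * d <= e * (t - s) / 4.
  by rewrite mulrA ler_pdivrMr // mulrAC ler_pdivlMr //; nra.
exists (t - d); first by apply/andP; split; lra.
move=> t' /andP[t'_gt t't]; have st' : s < t' by lra.
apply: le_trans (leftD_le_slope as_ st' (lt_trans t't tb)) _.
have [tv vb] : t < v /\ v < b by rewrite /v; split; lra.
have shift := concave_slope_le_shift as_ st' t't tv vb; rewrite -/sg in shift.
have sg_t't : sg * (t - t') <= sg * d by rewrite ler_wpM2l //; lra.
have half : (t - s) / 2 <= t' - s by lra.
have ste' : slope f s t * (t' - s) <= (leftD f t + e / 2) * (t' - s).
  by rewrite ler_pM2r // subr_gt0.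
suff : slope f s t' * (t' - s) <= (leftD f t + e) * (t' - s).
  by rewrite ler_pM2r // subr_gt0.
nra.
Qed.

End ConcaveSlopes.

Lemma negligible_itv_point (R : realType) (A : set R) lo hi :
  (@lebesgue_measure R).-negligible A -> lo < hi -> exists2 t, lo < t < hi & ~ A t.
Proof.
move=> [B [mB B0 AB]] lohi; apply: contrapT => no_point.
have itvB : [set` `]lo, hi[] `<=` B.
  move=> x; rewrite /= in_itv /= => xlh; apply: AB; apply: contrapT => nAx.
  by apply: no_point; exists x.
have := le_measure (@lebesgue_measure R) _ _ itvB.
rewrite !inE => /(_ (measurable_itv _) mB) le_itvB.
have : (lebesgue_measure `]lo, hi[%classic <= 0)%E.
  by apply: le_trans le_itvB _; rewrite le_eqVlt; apply/orP; left; exact/eqP.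
by rewrite lebesgue_measure_itv /= lte_fin lohi -EFinD lee_fin; lra.
Qed.

Lemma PM_leftD_gap (R : realType) (f : R -> R) c t u :
  concave_on f (-1) 0 -> concave_on f 0 1 -> PM c f ->
  0 < t -> t < 1 -> -1 < u -> u < 0 -> t <= u + 1 ->
  c <= leftD f t - leftD f u.
Proof.
move=> f_neg f_pos f_PM t0 t1 u1 u0 tu; apply/ler_addgt0Pr => e e0.
have [s /andP[s0 st] usc] := leftD_usc_left f_pos t0 t1 e0.
have [t' st't not_bad] := negligible_itv_point f_PM st; have /andP[st' t't] := st't.
have [df' df'1 gap] : [/\ derivable f t' 1, derivable f (t' - 1) 1 &
    c <= derive1 f t' - derive1 f (t' - 1)].
  by apply: contrapT => bad; apply: not_bad; split => //; apply/andP; split; lra.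
have := derive1_le_leftD f_pos (lt_trans s0 st') (lt_trans t't t1) df'.
have := usc t' st't.
have [t'1 t'u] : -1 < t' - 1 /\ t' - 1 < u by split; lra.
have := leftD_le_derive1 f_neg t'1 t'u u0 df'1.
lra.
Qed.

Lemma col_diag_dominant_unitmx (R : realFieldType) n (M : 'M[R]_n) :
  (forall r, \sum_(j | j != r) `|M j r| < `|M r r|) -> M \in unitmx.
Proof.
move=> dom; rewrite unitmxE unitfE; apply/negP => /det0P [v v_neq0 vM0].
case: n M v v_neq0 vM0 dom => [|n] M v v_neq0 vM0 dom.
  by move/eqP: v_neq0; apply; apply/rowP => -[].
have [r _ v_max] := @arg_maxP _ _ 'I_n.+1 ord0 xpredT (fun i => `|v 0 i|) isT.
have col_r : v 0 r * M r r = - \sum_(j | j != r) v 0 j * M j r.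
  have := congr1 (fun A : 'M[R]_(1, n.+1) => A 0 r) vM0; rewrite !mxE (bigD1 r) //=.
  by move/eqP; rewrite addr_eq0 => /eqP.
have bound : `|v 0 r| * `|M r r| <= `|v 0 r| * \sum_(j | j != r) `|M j r|.
  rewrite -normrM col_r normrN mulr_sumr; apply: le_trans (ler_norm_sum _ _ _) _.
  by apply: ler_sum => j _; rewrite normrM; apply: ler_wpM2r => //; exact: v_max.
have [vr0|] := eqVneq `|v 0 r| 0; last first.
  move=> vr_neq0; have vr_gt0 : 0 < `|v 0 r| by rewrite lt_def vr_neq0 normr_ge0.
  by move: bound; rewrite ler_pM2l // leNgt dom.
move/eqP: v_neq0; apply; apply/rowP => j; rewrite mxE; apply/normr0_eq0.
by apply/eqP; rewrite eq_le normr_ge0 andbT -vr0; exact: v_max.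
Qed.

Section Breakpoints.
Variables (R : realType) (n : nat) (y : nat -> R).

Lemma ypt_last : ypt n y n.+1 = 1.
Proof. by rewrite /ypt /= ltnn. Qed.

Lemma ypt_inner r : (1 <= r <= n)%N -> ypt n y r = y r.
Proof. by case: r => [//|r] /andP[_ rn]; rewrite /ypt /= rn. Qed.

Lemma in_rint_lb j t : in_rint n y j t -> ypt n y j <= t /\ ((0 < j)%N -> ypt n y j < t).
Proof. by case: j => [|j] [tj _]; split => //; apply: ltW. Qed.

Lemma in_rint_ub j t : (j <= n)%N -> in_rint n y j t ->
  t <= ypt n y j.+1 /\ ((j < n)%N -> t < ypt n y j.+1).
Proof.
move=> jn [_]; have [->|neq_jn] := eqVneq j n; first by rewrite ypt_last ltnn.
by move=> tj; split => [|_ //]; apply: ltW.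
Qed.

Hypothesis y_inS : inS n y.

Lemma ypt_lt i j : (i < j)%N -> (j <= n.+1)%N -> ypt n y i < ypt n y j.
Proof.
elim: j => [//|j IH]; rewrite ltnS leq_eqVlt => /orP[/eqP -> | ij] jn; first exact: y_inS.
exact: lt_trans (IH ij (ltnW jn)) (y_inS jn).
Qed.

Lemma ypt_le i j : (i <= j)%N -> (j <= n.+1)%N -> ypt n y i <= ypt n y j.
Proof. by rewrite leq_eqVlt => /orP[/eqP -> // | ij] jn; exact/ltW/ypt_lt. Qed.

Lemma y_inner_01 r : (1 <= r <= n)%N -> 0 < y r < 1.
Proof.
move=> rn; have /andP[r1 r_n] := rn; rewrite -ypt_inner //.
have := @ypt_lt 0 r r1 (leqW r_n); have := @ypt_lt r n.+1 r_n (leqnn _).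
by rewrite ypt_last => ? ?; apply/andP.
Qed.

Lemma in_rint_01 j t : (j <= n)%N -> in_rint n y j t -> 0 <= t <= 1.
Proof.
move=> jn tj; have [lb _] := in_rint_lb tj; have [ub _] := in_rint_ub jn tj.
have := ypt_le (leq0n j) (leqW jn); have := @ypt_le j.+1 n.+1 jn (leqnn _).
by rewrite ypt_last; move=> hi lo; apply/andP; split; [exact: le_trans lb | exact: le_trans hi].
Qed.

End Breakpoints.

Section DiagonalDominance.
Variables (R : realType) (n : nat) (K : nat -> R -> R) (c : R) (y : nat -> R)
  (tlo thi : nat -> R) (mu : nat -> nat -> R).
Hypothesis K_kernel : forall r, (1 <= r <= n)%N -> kernel_function (K r) /\ PM c (K r).
Hypothesis y_inS : inS n y.
Hypothesis t_rint : forall j, (j <= n)%N ->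
  [/\ in_rint n y j (tlo j), in_rint n y j (thi j) & tlo j <= thi j].
Hypothesis mu_leftD : forall j r, (j <= n)%N -> (1 <= r <= n)%N ->
  leftD (K r) (thi j - y r) <= mu j r <= leftD (K r) (tlo j - y r).

Local Notation a j r := (mu j r - mu j.-1 r).

Lemma offdiag_nonpos j r : (1 <= j <= n)%N -> (1 <= r <= n)%N -> j != r -> a j r <= 0.
Proof.
move=> /andP[j1 jn] rn neq_jr; have /andP[r1 r_n] := rn.
have [[K_neg [K_pos _]] _] := K_kernel rn.
have jn' : (j.-1 <= n)%N := leq_trans (leq_pred j) jn.
have [_ thi_rint _] := t_rint jn'; have [tlo_rint _ _] := t_rint jn.
have /andP[_ mu_j] := mu_leftD jn rn; have /andP[mu_j1 _] := mu_leftD jn' rn.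
suff : leftD (K r) (tlo j - y r) <= leftD (K r) (thi j.-1 - y r) by lra.
have thi_lt : thi j.-1 < ypt n y j.
  have [_] := in_rint_ub jn' thi_rint; rewrite prednK //; apply; lia.
have [_ /(_ j1) tlo_gt] := in_rint_lb tlo_rint.
have := in_rint_01 y_inS jn' thi_rint; have := in_rint_01 y_inS jn tlo_rint.
have := y_inner_01 y_inS rn; have := ypt_inner y rn.
have [j_lt_r|r_lt_j|eq_jr] := ltngtP j r; last by rewrite eq_jr eqxx in neq_jr.
- have [_ /(_ (leq_trans j_lt_r r_n)) tlo_lt] := in_rint_ub jn tlo_rint.
  have := ypt_le y_inS j_lt_r (leqW r_n).
  by move=> *; apply: (leftD_nonincr K_neg); lra.
- have [r_le_j1 j1_pos] : (r <= j.-1)%N /\ (0 < j.-1)%N by lia.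
  have [_ /(_ j1_pos) thi_gt] := in_rint_lb thi_rint.
  have := ypt_le y_inS r_le_j1 (leqW jn').
  by move=> *; apply: (leftD_nonincr K_pos); lra.
Qed.

Lemma mu_gap_ge r : (1 <= r <= n)%N -> c <= mu n r - mu 0 r.
Proof.
move=> rn; have /andP[r1 r_n] := rn; have n_pos : (0 < n)%N := leq_trans r1 r_n.
have [[K_neg [K_pos _]] K_PM] := K_kernel rn.
have [tlo0_rint _ _] := t_rint (leq0n n); have [_ thin_rint _] := t_rint (leqnn n).
have /andP[mu_n _] := mu_leftD (leqnn n) rn; have /andP[_ mu_0] := mu_leftD (leq0n n) rn.
have [_ /(_ n_pos) tlo0_lt] := in_rint_ub (leq0n n) tlo0_rint.
have [_ /(_ n_pos) thin_gt] := in_rint_lb thin_rint.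
have := in_rint_01 y_inS (leq0n n) tlo0_rint; have := in_rint_01 y_inS (leqnn n) thin_rint.
have := y_inner_01 y_inS rn; have := ypt_inner y rn.
have := ypt_le y_inS r1 (leqW r_n); have := ypt_le y_inS r_n (leqW (leqnn n)).
move=> *; have : c <= leftD (K r) (thi n - y r) - leftD (K r) (tlo 0 - y r).
  by apply: PM_leftD_gap => //; lra.
lra.
Qed.

Lemma diag_margin r : (1 <= r <= n)%N ->
  c <= a r r - \sum_(1 <= j < n.+1 | j != r) `|a j r|.
Proof.
move=> rn; have /andP[r1 r_n] := rn.
have col_sum : \sum_(1 <= j < n.+1) a j r = mu n r - mu 0 r.
  by apply: (@telescope_sumr_eq _ 1 n.+1 (fun k => mu k.-1 r)).
have split_r : \sum_(1 <= j < n.+1) a j r = a r r + \sum_(1 <= j < n.+1 | j != r) a j r.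
  by rewrite (bigD1_seq r) ?mem_index_iota ?iota_uniq //; lia.
have offdiag_abs : \sum_(1 <= j < n.+1 | j != r) `|a j r| =
    - \sum_(1 <= j < n.+1 | j != r) a j r.
  rewrite -sumrN big_nat_cond [RHS]big_nat_cond; apply: eq_bigr => j.
  by move=> /andP[/andP[j1 jn] neq_jr]; rewrite ler0_norm // offdiag_nonpos // j1.
have := mu_gap_ge rn; lra.
Qed.

End DiagonalDominance.

Theorem lemma6p4 (R : realType) (n : nat) (J : R -> \bar R)
  (K : nat -> R -> R) (c : R) (y : nat -> R)
  (tlo thi : nat -> R) (mu : nat -> nat -> R) :
  0 < c ->
  n_field n J ->
  (forall r, (1 <= r <= n)%N -> kernel_function (K r) /\ PM c (K r)) ->
  inY n J K y ->
  (forall j, (j <= n)%N ->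
     [/\ in_rint n y j (tlo j), in_rint n y j (thi j) & tlo j <= thi j]) ->
  (forall j r, (j <= n)%N -> (1 <= r <= n)%N ->
     leftD (K r) (thi j - y r) <= mu j r <= leftD (K r) (tlo j - y r)) ->
  let a := fun j r : nat => mu j r - mu j.-1 r in
  (forall r, (1 <= r <= n)%N ->
     c <= a r r - \sum_(1 <= j < n.+1 | j != r) `|a j r|) /\
  (\matrix_(j < n, r < n) a j.+1 r.+1) \in unitmx.
Proof.
move=> c_gt0 _ K_kernel [y_inS _] t_rint mu_leftD a.
have margin := diag_margin K_kernel y_inS t_rint mu_leftD.
split=> //; apply: col_diag_dominant_unitmx => r.
have -> : \sum_(j | j != r) `|(\matrix_(j < n, r < n) a j.+1 r.+1) j r| =
    \sum_(1 <= j < n.+1 | j != r.+1) `|a j r.+1|.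
  by rewrite big_add1 /= big_mkord; apply: eq_big => [j|j _]; rewrite ?mxE.
rewrite mxE; apply: lt_le_trans (ler_norm _); rewrite -subr_gt0.
exact: lt_le_trans c_gt0 (margin r.+1 (ltn_ord r)).
Qed.
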